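(* Let $a,b\in\mathbb{R}\setminus\{0\}$, $s\le t$, and let $$m=\int_s^t\int_s^\sigma e^{ia\sigma}e^{ib\sigma_1}d\sigma_1\,d\sigma-I_{a+b=0}\frac{t-s}{ib}.$$ If $\gamma\in[0,1/2]$ then $$|m|\lesssim\frac{|t-s|^{2\gamma}}{|b|^{\gamma}|a|^{1-\gamma}|a+b|^{1-2\gamma}}+\frac{|t-s|^{2\gamma}}{|a|^{1-\gamma}|b|^{1-\gamma}}.$$
   Context: $I_{a+b=0}$ is $1$ if $a+b=0$ and $0$ otherwise; the implicit constant is independent of $a,b,s,t$. When $a+b=0$ and $\gamma<1/2$ the first term on the right is interpreted as $+\infty$. *)

From Stdlib Require Import Reals.
From Coquelicot Require Import Coquelicot.
Open Scope R_scope.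

Definition cis (x : R) : C := (cos x, sin x).

(* x^y for x >= 0 with the convention 0^0 = 1 and 0^y = 0 for y > 0 *)
Definition rpow (x y : R) : R :=
  if Req_EM_T x 0 then (if Req_EM_T y 0 then 1 else 0) else Rpower x y.

Definition ind_sum0 (a b : R) : R := if Req_EM_T (a + b) 0 then 1 else 0.

Definition m_int (a b s t : R) : C :=
  Cminus
    (RInt (V := C_R_CompleteNormedModule)
       (fun sigma => RInt (V := C_R_CompleteNormedModule)
          (fun sigma1 => Cmult (cis (a * sigma)) (cis (b * sigma1))) s sigma) s t)
    (Cmult (RtoC (ind_sum0 a b)) (Cdiv (RtoC (t - s)) (0, b))).

(* Computing the inner integral gives
     m = (E_{a+b} - I_{a+b=0} (t-s) - e^{ibs} E_a) / (ib),   E_c = int_s^t e^{icx} dx,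
   with |E_c| <= min (t-s, 2/|c|).  Since |a| <= |b| + |a+b|, this yields
   |m| <= 6 / (|a| min (|a+b|, |b|)), and together with the bound |m| <= (t-s)^2
   valid off resonance also |m|^2 <= 8 (t-s)^2 / (|a| |b|).  The claim is the interpolation
   |m| = |m|^(1-2 gamma) (|m|^2)^gamma of these two bounds, because
   min (|a+b|, |b|)^(2 gamma - 1) is one of |a+b|^(2 gamma - 1) and |b|^(2 gamma - 1). *)

From Stdlib Require Import Reals Lra Psatz.
From Coquelicot Require Import Coquelicot.
Open Scope R_scope.

Lemma Cmod_cis x : Cmod (cis x) = 1.
Proof.
  unfold Cmod, cis; cbn [fst snd].
  rewrite <- sqrt_1; f_equal.
  rewrite <- (sin2_cos2 x); unfold Rsqr; ring.
Qed.

Lemma cis_add x y : cis (x + y) = (cis x * cis y)%C.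
Proof.
  unfold cis, Cmult; cbn [fst snd].
  rewrite cos_plus, sin_plus; f_equal; ring.
Qed.

Lemma Cmod_pure_imag c : Cmod (0, c) = Rabs c.
Proof.
  unfold Cmod; cbn [fst snd].
  rewrite <- sqrt_Rsqr_abs; f_equal; unfold Rsqr; ring.
Qed.

Lemma pure_imag_neq0 c : c <> 0 -> ((0, c) : C) <> 0%C.
Proof. intros Hc H; injection H; auto. Qed.

Lemma is_RInt_Cmult_l (f : R -> C) (a b : R) (I z : C) :
  is_RInt (V := C_R_NormedModule) f a b I ->
  is_RInt (V := C_R_NormedModule) (fun x => (z * f x)%C) a b (z * I)%C.
Proof.
  intros HI.
  pose proof (is_RInt_fct_extend_fst (U := R_NormedModule) (V := R_NormedModule) f a b I HI) as H1.
  pose proof (is_RInt_fct_extend_snd (U := R_NormedModule) (V := R_NormedModule) f a b I HI) as H2.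
  destruct z as [z1 z2], I as [i1 i2]; simpl in H1, H2.
  apply (is_RInt_fct_extend_pair (U := R_NormedModule) (V := R_NormedModule) _ _ _
           (z1 * i1 - z2 * i2) (z1 * i2 + z2 * i1)).
  - apply (is_RInt_ext (fun x => z1 * fst (f x) - z2 * snd (f x))).
    { intros x _; destruct (f x); reflexivity. }
    apply (is_RInt_minus (V := R_NormedModule));
      apply (is_RInt_scal (V := R_NormedModule)); assumption.
  - apply (is_RInt_ext (fun x => z1 * snd (f x) + z2 * fst (f x))).
    { intros x _; destruct (f x); simpl; ring. }
    apply (is_RInt_plus (V := R_NormedModule));
      apply (is_RInt_scal (V := R_NormedModule)); assumption.
Qed.

(* [cis_integral c u v] is the integral of [cis (c x)] over [[u, v]]; the case [c = 0] is
   included so that [is_RInt_cis] holds for every frequency. *)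
Definition cis_integral (c u v : R) : C :=
  if Req_EM_T c 0 then RtoC (v - u) else ((cis (c * v) - cis (c * u)) / (0, c))%C.

Lemma is_RInt_cis c u v :
  is_RInt (V := C_R_NormedModule) (fun x => cis (c * x)) u v (cis_integral c u v).
Proof.
  unfold cis_integral; destruct (Req_EM_T c 0) as [-> | Hc].
  - apply (is_RInt_ext (fun _ => RtoC 1)).
    { intros x _; unfold cis; rewrite Rmult_0_l, cos_0, sin_0; reflexivity. }
    replace (RtoC (v - u)) with (scal (v - u) (RtoC 1)).
    + apply (is_RInt_const (V := C_R_NormedModule)).
    + unfold scal; simpl; unfold prod_scal, RtoC; simpl.
      unfold scal; simpl; unfold mult; simpl; f_equal; ring.
  - replace ((cis (c * v) - cis (c * u)) / (0, c))%C with
      (minus (sin (c * v) / c) (sin (c * u) / c), minus (- cos (c * v) / c) (- cos (c * u) / c)).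
    2:{ unfold cis, Cdiv, Cminus, Cplus, Copp, Cinv, Cmult, minus, plus, opp; simpl.
        f_equal; field; auto. }
    apply (is_RInt_fct_extend_pair (U := R_NormedModule) (V := R_NormedModule)); simpl.
    + apply (is_RInt_derive (V := R_CompleteNormedModule) (fun x => sin (c * x) / c)); intros x _.
      * auto_derive; auto. field; auto.
      * apply (ex_derive_continuous (V := R_NormedModule)); auto_derive; auto.
    + apply (is_RInt_derive (V := R_CompleteNormedModule) (fun x => - cos (c * x) / c)); intros x _.
      * auto_derive; auto. field; auto.
      * apply (ex_derive_continuous (V := R_NormedModule)); auto_derive; auto.
Qed.

Lemma Cmod_cis_integral_le_length c u v : Cmod (cis_integral c u v) <= Rabs (v - u).
Proof.
  rewrite Cmod_norm, <- (Rmult_1_r (Rabs (v - u))).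
  apply (norm_RInt_le_const_abs (V := C_R_NormedModule) (fun x => cis (c * x)));
    [| apply is_RInt_cis].
  intros x _; rewrite <- Cmod_norm, Cmod_cis; lra.
Qed.

Lemma Cmod_cis_integral_le_freq c u v : c <> 0 -> Cmod (cis_integral c u v) <= 2 / Rabs c.
Proof.
  intros Hc; unfold cis_integral; destruct (Req_EM_T c 0) as [| _]; [contradiction |].
  rewrite Cmod_div, Cmod_pure_imag by now apply pure_imag_neq0.
  apply Rmult_le_compat_r; [apply Rlt_le, Rinv_0_lt_compat, Rabs_pos_lt; assumption |].
  unfold Cminus; eapply Rle_trans; [apply Cmod_triangle |].
  rewrite Cmod_opp, !Cmod_cis; lra.
Qed.

Lemma RInt_cis_mul_cis a b s x :
  RInt (V := C_R_CompleteNormedModule) (fun y => (cis (a * x) * cis (b * y))%C) s x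
  = (cis (a * x) * cis_integral b s x)%C.
Proof. apply is_RInt_unique, is_RInt_Cmult_l, is_RInt_cis. Qed.

Lemma cis_mul_cis_integral a b s x : b <> 0 ->
  (cis (a * x) * cis_integral b s x)%C
  = (/ (0, b) * cis ((a + b) * x) - cis (b * s) / (0, b) * cis (a * x))%C.
Proof.
  intros Hb; unfold cis_integral; destruct (Req_EM_T b 0) as [| _]; [contradiction |].
  rewrite Rmult_plus_distr_r, cis_add.
  field; now apply pure_imag_neq0.
Qed.

Lemma is_RInt_m_integrand a b s t : b <> 0 ->
  is_RInt (V := C_R_NormedModule)
    (fun x => RInt (V := C_R_CompleteNormedModule)
                (fun y => (cis (a * x) * cis (b * y))%C) s x) s t
    (/ (0, b) * cis_integral (a + b) s t - cis (b * s) / (0, b) * cis_integral a s t)%C.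
Proof.
  intros Hb.
  apply (is_RInt_ext
           (fun x => / (0, b) * cis ((a + b) * x) - cis (b * s) / (0, b) * cis (a * x))%C).
  { intros x _; rewrite RInt_cis_mul_cis; symmetry; now apply cis_mul_cis_integral. }
  apply (is_RInt_minus (V := C_R_NormedModule)); apply is_RInt_Cmult_l, is_RInt_cis.
Qed.

Lemma m_int_closed_form a b s t : b <> 0 ->
  m_int a b s t
  = (/ (0, b) * (cis_integral (a + b) s t - RtoC (ind_sum0 a b) * RtoC (t - s))
     - cis (b * s) / (0, b) * cis_integral a s t)%C.
Proof.
  intros Hb; unfold m_int.
  rewrite (is_RInt_unique (V := C_R_CompleteNormedModule) _ _ _ _ (is_RInt_m_integrand a b s t Hb)).
  field; now apply pure_imag_neq0.
Qed.

Lemma ind_sum0_nonres a b : a + b <> 0 -> ind_sum0 a b = 0.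
Proof.
  intros Hab; unfold ind_sum0; destruct (Req_EM_T (a + b) 0); [contradiction | reflexivity].
Qed.

Lemma ind_sum0_res a b : a + b = 0 -> ind_sum0 a b = 1.
Proof.
  intros Hab; unfold ind_sum0; destruct (Req_EM_T (a + b) 0); [reflexivity | contradiction].
Qed.

Lemma m_int_nonres a b s t : b <> 0 -> a + b <> 0 ->
  m_int a b s t
  = (/ (0, b) * cis_integral (a + b) s t - cis (b * s) / (0, b) * cis_integral a s t)%C.
Proof.
  intros Hb Hab; rewrite m_int_closed_form, ind_sum0_nonres by assumption.
  field; now apply pure_imag_neq0.
Qed.

Lemma m_int_res a b s t : b <> 0 -> a + b = 0 ->
  m_int a b s t = (- (cis (b * s) / (0, b) * cis_integral a s t))%C.
Proof.
  intros Hb Hab; rewrite m_int_closed_form, ind_sum0_res by assumption.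
  unfold cis_integral at 1; rewrite Hab; destruct (Req_EM_T 0 0) as [_ |]; [| lra].
  field; now apply pure_imag_neq0.
Qed.

Lemma Cmod_m_int_le_nonres a b s t : b <> 0 -> a + b <> 0 ->
  Cmod (m_int a b s t)
  <= (Cmod (cis_integral (a + b) s t) + Cmod (cis_integral a s t)) / Rabs b.
Proof.
  intros Hb Hab; rewrite m_int_nonres by assumption.
  unfold Cminus; eapply Rle_trans; [apply Cmod_triangle |].
  rewrite Cmod_opp, !Cmod_mult, Cmod_div, Cmod_inv, Cmod_cis, Cmod_pure_imag
    by now apply pure_imag_neq0.
  right; field; now apply Rabs_no_R0.
Qed.

Lemma Cmod_m_int_res a b s t : b <> 0 -> a + b = 0 ->
  Cmod (m_int a b s t) = Cmod (cis_integral a s t) / Rabs b.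
Proof.
  intros Hb Hab; rewrite m_int_res, Cmod_opp, Cmod_mult, Cmod_div, Cmod_cis, Cmod_pure_imag
    by (assumption || now apply pure_imag_neq0).
  field; now apply Rabs_no_R0.
Qed.

Lemma Cmod_m_int_le_sq_length a b s t : b <> 0 -> a + b <> 0 ->
  Cmod (m_int a b s t) <= Rabs (t - s) * Rabs (t - s).
Proof.
  intros Hb Hab; rewrite m_int_nonres, Cmod_norm by assumption.
  eapply (norm_RInt_le_const_abs (V := C_R_NormedModule));
    [| exact (is_RInt_m_integrand a b s t Hb)].
  intros x Hx.
  rewrite <- Cmod_norm, RInt_cis_mul_cis, Cmod_mult, Cmod_cis, Rmult_1_l.
  eapply Rle_trans; [apply Cmod_cis_integral_le_length |].
  apply Rabs_le_between_min_max; rewrite Rmin_comm, Rmax_comm; exact Hx.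
Qed.

Lemma Rabs_le_add_Rabs_sum a b : Rabs a <= Rabs b + Rabs (a + b).
Proof.
  pose proof (Rabs_triang (a + b) (- b)) as H.
  rewrite Rabs_Ropp in H; replace (a + b + - b) with a in H by ring; lra.
Qed.

Lemma le_div_min_of_le_inv_sum X A B S : 0 < A -> 0 < B -> 0 < S -> A <= B + S ->
  X <= (2 / S + 2 / A) / B -> X <= 6 / (A * Rmin S B).
Proof.
  intros HA HB HS HABS HX.
  apply Rle_div_r in HX; [| lra].
  assert (HXp : X * B * (S * A) <= 2 * A + 2 * S).
  { replace (2 * A + 2 * S) with ((2 / S + 2 / A) * (S * A)) by (field; split; lra).
    apply Rmult_le_compat_r; [nra | exact HX]. }
  assert (HM : 0 < A * Rmin S B) by (apply Rmult_lt_0_compat; [| apply Rmin_pos]; assumption).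
  apply Rle_div_r; [exact HM |].
  apply Rmin_case_strong; intros Hmin; nra.
Qed.

Lemma sq_le_of_freq_length_bounds X A B S L : 0 <= X -> 0 < A -> 0 < B -> 0 < S ->
  A <= B + S -> X <= 6 / (A * Rmin S B) -> X <= 2 * L / B -> X <= L * L ->
  X * X <= 8 * (L * L) / (A * B).
Proof.
  intros HX HA HB HS HABS Hfreq Hlen Hsq.
  apply (Rle_div_r (X * X)); [apply Rmult_lt_0_compat; assumption |].
  destruct (Rle_dec A (2 * B)) as [HAB | HAB].
  - apply Rle_div_r in Hlen; [| lra].
    assert (X * B * (X * B) <= 2 * L * (2 * L)) by (apply Rmult_le_compat; nra).
    nra.
  - rewrite Rmin_right in Hfreq by lra.
    apply Rle_div_r in Hfreq; [| nra].
    assert (X * (X * (A * B)) <= L * L * 6).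
    { apply Rmult_le_compat; try assumption.
      apply Rmult_le_pos; [assumption | nra]. }
    nra.
Qed.

Lemma Rpower_interpolate X P Q g : 0 < X -> 0 <= g <= 1 / 2 ->
  X <= P -> X * X <= Q -> X <= Rpower P (1 - 2 * g) * Rpower Q g.
Proof.
  intros HX Hg HP HQ.
  assert (HXsplit : X = Rpower X (1 - 2 * g) * Rpower (X * X) g).
  { rewrite <- Rpower_mult_distr, <- !Rpower_plus by assumption.
    replace (1 - 2 * g + (g + g)) with 1 by ring.
    now rewrite Rpower_1. }
  rewrite HXsplit at 1.
  apply Rmult_le_compat; try (left; apply exp_pos);
    apply Rle_Rpower_l; try lra; split; try assumption; nra.
Qed.

Lemma Rpower_interpolant c A B M L g : 0 < c -> 0 < A -> 0 < B -> 0 < M -> 0 < L ->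
  Rpower (c / (A * M)) (1 - 2 * g) * Rpower (c * (L * L) / (A * B)) g
  = Rpower c (1 - g)
    * (Rpower L (2 * g) / (Rpower B g * Rpower A (1 - g) * Rpower M (1 - 2 * g))).
Proof.
  intros Hc HA HB HM HL; unfold Rpower.
  rewrite !ln_div, !ln_mult by (repeat apply Rmult_lt_0_compat; assumption).
  unfold Rdiv; rewrite !Rinv_mult, <- !exp_Ropp, <- !exp_plus.
  f_equal; ring.
Qed.

Lemma rpow_pos x y : 0 < x -> rpow x y = Rpower x y.
Proof. intros Hx; unfold rpow; destruct (Req_EM_T x 0); [lra | reflexivity]. Qed.

Lemma rpow_nonneg x y : 0 <= rpow x y.
Proof.
  unfold rpow; destruct (Req_EM_T x 0); [destruct (Req_EM_T y 0); lra |].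
  left; apply exp_pos.
Qed.

Lemma rpow_0 x : rpow x 0 = 1.
Proof.
  unfold rpow; destruct (Req_EM_T x 0); [destruct (Req_EM_T 0 0); lra |].
  unfold Rpower; rewrite Rmult_0_l; apply exp_0.
Qed.

Lemma le_interpolated_terms X A B S L g :
  0 <= X -> 0 < A -> 0 < B -> 0 < S -> 0 <= L -> 0 <= g <= 1 / 2 ->
  X <= 6 / (A * Rmin S B) -> X * X <= 8 * (L * L) / (A * B) ->
  X <= 8 * ( rpow L (2 * g) / (rpow B g * rpow A (1 - g) * rpow S (1 - 2 * g))
           + rpow L (2 * g) / (rpow A (1 - g) * rpow B (1 - g))).
Proof.
  intros HX HA HB HS HL Hg Hfreq Hsq.
  rewrite !(rpow_pos A), !(rpow_pos B), (rpow_pos S) by assumption.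
  assert (HT1 : 0 <= rpow L (2 * g) / (Rpower B g * Rpower A (1 - g) * Rpower S (1 - 2 * g))).
  { apply Rdiv_le_0_compat; [apply rpow_nonneg |].
    repeat apply Rmult_lt_0_compat; apply exp_pos. }
  assert (HT2 : 0 <= rpow L (2 * g) / (Rpower A (1 - g) * Rpower B (1 - g))).
  { apply Rdiv_le_0_compat; [apply rpow_nonneg |].
    apply Rmult_lt_0_compat; apply exp_pos. }
  destruct HX as [HX | <-]; [| lra].
  destruct HL as [HL | <-].
  2:{ rewrite Rmult_0_l, Rmult_0_r, Rdiv_0_l in Hsq; nra. }
  rewrite !(rpow_pos L) in * by assumption.
  set (M := Rmin S B).
  assert (HM : 0 < M) by (apply Rmin_pos; assumption).
  eapply Rle_trans.
  { apply (Rpower_interpolate X (8 / (A * M)) (8 * (L * L) / (A * B)) g); try assumption.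
    eapply Rle_trans; [exact Hfreq |].
    apply Rmult_le_compat_r; [left; apply Rinv_0_lt_compat; nra | lra]. }
  rewrite Rpower_interpolant by (lra || assumption).
  apply Rmult_le_compat.
  - left; apply exp_pos.
  - apply Rdiv_le_0_compat; [left; apply exp_pos |].
    repeat apply Rmult_lt_0_compat; apply exp_pos.
  - rewrite <- (Rpower_1 8) at 2 by lra.
    apply Rle_Rpower; lra.
  - unfold M; apply Rmin_case_strong; intros _; [lra |].
    replace (Rpower B g * Rpower A (1 - g) * Rpower B (1 - 2 * g))
      with (Rpower A (1 - g) * Rpower B (1 - g)); [lra |].
    replace (1 - g) with (g + (1 - 2 * g)) at 2 by ring.
    rewrite Rpower_plus; ring.
Qed.

Lemma Cmod_m_int_le_freq a b s t : a <> 0 -> b <> 0 -> a + b <> 0 ->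
  Cmod (m_int a b s t) <= 6 / (Rabs a * Rmin (Rabs (a + b)) (Rabs b)).
Proof.
  intros Ha Hb Hab.
  apply le_div_min_of_le_inv_sum; try (apply Rabs_pos_lt; assumption).
  { apply Rabs_le_add_Rabs_sum. }
  eapply Rle_trans; [apply Cmod_m_int_le_nonres; assumption |].
  apply Rmult_le_compat_r; [left; apply Rinv_0_lt_compat, Rabs_pos_lt; assumption |].
  apply Rplus_le_compat; apply Cmod_cis_integral_le_freq; assumption.
Qed.

Lemma Cmod_m_int_res_le_freq a b s t : b <> 0 -> a + b = 0 ->
  Cmod (m_int a b s t) <= 2 / (Rabs a * Rabs b).
Proof.
  intros Hb Hab.
  assert (Ha : a <> 0) by lra.
  rewrite Cmod_m_int_res by assumption.
  replace (2 / (Rabs a * Rabs b)) with (2 / Rabs a / Rabs b)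
    by (field; split; apply Rabs_no_R0; assumption).
  apply Rmult_le_compat_r; [left; apply Rinv_0_lt_compat, Rabs_pos_lt; assumption |].
  apply Cmod_cis_integral_le_freq; assumption.
Qed.

Lemma Cmod_m_int_sq_le a b s t : a <> 0 -> b <> 0 ->
  Cmod (m_int a b s t) * Cmod (m_int a b s t)
  <= 8 * (Rabs (t - s) * Rabs (t - s)) / (Rabs a * Rabs b).
Proof.
  intros Ha Hb.
  assert (HA : 0 < Rabs a) by (apply Rabs_pos_lt; assumption).
  assert (HB : 0 < Rabs b) by (apply Rabs_pos_lt; assumption).
  pose proof (Cmod_ge_0 (m_int a b s t)) as HX.
  destruct (Req_dec (a + b) 0) as [Hab | Hab].
  - assert (HAB : Rabs a = Rabs b) by (replace a with (- b) by lra; apply Rabs_Ropp).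
    assert (Hlen : Cmod (m_int a b s t) * Rabs b <= Rabs (t - s)).
    { rewrite Cmod_m_int_res by assumption.
      replace (Cmod (cis_integral a s t) / Rabs b * Rabs b) with (Cmod (cis_integral a s t))
        by (field; lra).
      apply Cmod_cis_integral_le_length. }
    assert (HXB : 0 <= Cmod (m_int a b s t) * Rabs b) by nra.
    pose proof (Rmult_le_compat _ _ _ _ HXB HXB Hlen Hlen).
    apply (Rle_div_r (_ * _)); [nra |].
    rewrite HAB; nra.
  - apply sq_le_of_freq_length_bounds with (Rabs (a + b)); try assumption.
    + apply Rabs_pos_lt; assumption.
    + apply Rabs_le_add_Rabs_sum.
    + apply Cmod_m_int_le_freq; assumption.
    + eapply Rle_trans; [apply Cmod_m_int_le_nonres; assumption |].
      apply Rmult_le_compat_r; [left; apply Rinv_0_lt_compat; assumption |].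
      pose proof (Cmod_cis_integral_le_length (a + b) s t).
      pose proof (Cmod_cis_integral_le_length a s t).
      lra.
    + apply Cmod_m_int_le_sq_length; assumption.
Qed.

Theorem lemma8 (gamma : R) (hg0 : 0 <= gamma) (hg1 : gamma <= 1/2) :
  exists K : R, 0 < K /\
    forall a b s t : R, a <> 0 -> b <> 0 -> s <= t ->
      (a + b <> 0 \/ gamma = 1/2) ->
      Cmod (m_int a b s t) <=
        K * ( rpow (Rabs (t - s)) (2 * gamma) /
                (rpow (Rabs b) gamma * rpow (Rabs a) (1 - gamma)
                 * rpow (Rabs (a + b)) (1 - 2 * gamma))
            + rpow (Rabs (t - s)) (2 * gamma) /
                (rpow (Rabs a) (1 - gamma) * rpow (Rabs b) (1 - gamma))).
Proof.
  exists 8; split; [lra |].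
  (* The bound holds without the hypothesis [s <= t]. *)
  intros a b s t Ha Hb _ Hres.
  assert (HA : 0 < Rabs a) by (apply Rabs_pos_lt; assumption).
  assert (HB : 0 < Rabs b) by (apply Rabs_pos_lt; assumption).
  destruct (Req_dec (a + b) 0) as [Hab | Hab].
  - destruct Hres as [Hab' | ->]; [contradiction |].
    (* At gamma = 1/2 the factor |a+b|^0 is 1, so |a+b| may be replaced by |b| = |a|. *)
    replace (rpow (Rabs (a + b)) (1 - 2 * (1 / 2))) with (rpow (Rabs b) (1 - 2 * (1 / 2)))
      by (replace (1 - 2 * (1 / 2)) with 0 by lra; rewrite !rpow_0; reflexivity).
    apply le_interpolated_terms; try (assumption || apply Cmod_ge_0 || apply Rabs_pos || lra).
    + rewrite Rmin_left by lra.
      eapply Rle_trans; [apply Cmod_m_int_res_le_freq; assumption |].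
      apply Rmult_le_compat_r; [left; apply Rinv_0_lt_compat; nra | lra].
    + apply Cmod_m_int_sq_le; assumption.
  - apply le_interpolated_terms; try (assumption || apply Cmod_ge_0 || apply Rabs_pos || lra).
    + apply Rabs_pos_lt; assumption.
    + apply Cmod_m_int_le_freq; assumption.
    + apply Cmod_m_int_sq_le; assumption.
Qed.
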